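(* Let $m$ and $\ell$ be positive integers, let $d=\gcd(m,\ell)$, and let $n$ be an integer with $2\le n\le m$. Then $H(n;\ell,m)=1$ if and only if $H(n;m/d)\le d$. That is: there exist pairwise distinct $x_1,\dots,x_n\in\Omega_m$ with $x_1^{\ell}+\cdots+x_n^{\ell}=0$ if and only if $n\in W(m/d)$ and there exist $y_1,\dots,y_n\in\Omega_{m/d}$ with $y_1+\cdots+y_n=0$ in which each element of $\Omega_{m/d}$ occurs at most $d$ times among $y_1,\dots,y_n$.
   Context: For a positive integer $k$, $\Omega_k$ denotes the set of complex $k$th roots of unity. For positive integers $m,\ell$, $W_\ell(m)$ is the set of positive integers $n$ for which there exist $x_1,\dots,x_n\in\Omega_m$ (repetition allowed) with $x_1^{\ell}+\cdots+x_n^{\ell}=0$; $W(m)=W_1(m)$. For $n\in W_\ell(m)$, the height $H(n;\ell,m)$ is the smallest positive integer $h$ such that there exist $x_1,\dots,x_n\in\Omega_m$ with $x_1^{\ell}+\cdots+x_n^{\ell}=0$ and every value occurs at most $h$ times in the list $x_1,\dots,x_n$ (the maximum multiplicity is $h$). For $n\in W(m)$, $H(n;m)$ denotes $H(n;1,m)$. The statement $H(n;\ell,m)=1$ is understood to include $n\in W_\ell(m)$, and $H(n;m/d)\le d$ to include $n\in W(m/d)$. *)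

(* Complex numbers are modelled by algC (algebraic complex
   numbers), which contains all roots of unity. *)
From mathcomp Require Import all_boot all_order all_algebra all_field.
Set Implicit Arguments. Unset Strict Implicit. Unset Printing Implicit Defensive.
Import Order.TTheory GRing.Theory Num.Theory.
Local Open Scope ring_scope.

Definition in_Omega (k : nat) (x : algC) : Prop := x ^+ k = 1.

Definition mult (n : nat) (x : 'I_n -> algC) (z : algC) : nat :=
  #|[pred i | x i == z]|.

Definition in_W (l m n : nat) : Prop :=
  (0 < n)%N /\
  exists x : 'I_n -> algC,
    (forall i, in_Omega m (x i)) /\ \sum_(i < n) x i ^+ l = 0.

(* n \in W_l(m) and H(n; l, m) <= h : there is a vanishing configuration
   in which every value occurs at most h times (H is the least such h). *)
Definition height_le (n l m h : nat) : Prop :=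
  exists x : 'I_n -> algC,
    (forall i, in_Omega m (x i)) /\ \sum_(i < n) x i ^+ l = 0 /\
    (forall z, (mult x z <= h)%N).

From mathcomp Require Import all_boot all_order all_algebra all_field.
Import Order.TTheory GRing.Theory Num.Theory.
Set Implicit Arguments. Unset Strict Implicit. Unset Printing Implicit Defensive.
Local Open Scope ring_scope.

(* Write d = gcd(m, l) and m' = m/d. On the m-th roots of unity the map
   x |-> x^l lands in the m'-th roots of unity, and each of its fibres has
   exactly d elements: two m-th roots with the same l-th power differ by a
   d-th root of unity. Hence distinct x_i give values x_i^l repeated at most
   d times; conversely, a configuration of m'-th roots repeating each value
   at most d times is lifted injectively by sending the k-th occurrence of a
   value to the k-th element of its fibre. *)

Lemma mult_le1P n (x : 'I_n -> algC) :
  (forall z, (mult x z <= 1)%N) <-> injective x.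
Proof.
split=> [x_mult i j eq_xij | x_inj z].
  by have /card_le1_eqP := x_mult (x i); apply; rewrite inE ?eq_xij.
apply/card_le1_eqP => i j; rewrite !inE => /eqP xi /eqP xj.
by apply: x_inj; rewrite xi xj.
Qed.

Definition fiber_rank n (T : eqType) (y : 'I_n -> T) (i : 'I_n) : nat :=
  #|[pred j : 'I_n | (j < i)%N && (y j == y i)]|.

Section FiberRank.

Variables (n : nat) (T : eqType) (y : 'I_n -> T).

Lemma fiber_rank_lt i : (fiber_rank y i < #|[pred j | y j == y i]|)%N.
Proof.
apply/proper_card/properP; split.
  by apply/subsetP => j; rewrite !inE => /andP[_ ->].
by exists i; rewrite !inE ?eqxx ?ltnn.
Qed.

Lemma fiber_rank_ltn i j :
  y i = y j -> (i < j)%N -> (fiber_rank y i < fiber_rank y j)%N.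
Proof.
move=> eq_yij lt_ij; apply/proper_card/properP; split.
  apply/subsetP => k; rewrite !inE => /andP[lt_ki /eqP->].
  by rewrite (ltn_trans lt_ki lt_ij) eq_yij eqxx.
by exists i; rewrite !inE ?lt_ij ?eq_yij ?eqxx ?ltnn.
Qed.

Lemma fiber_rank_inj i j :
  y i = y j -> fiber_rank y i = fiber_rank y j -> i = j.
Proof.
move=> eq_yij eq_rank; case: (ltngtP i j) => [lt_ij | lt_ji | /val_inj //].
  by have := fiber_rank_ltn eq_yij lt_ij; rewrite eq_rank ltnn.
by have := fiber_rank_ltn (esym eq_yij) lt_ji; rewrite eq_rank ltnn.
Qed.

End FiberRank.

Section PowerMapOnRoots.

Variables (R : fieldType) (m l : nat).
Hypothesis m_gt0 : (0 < m)%N.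

Local Notation d := (gcdn m l).
Local Notation m' := (m %/ gcdn m l)%N.

Lemma gcdn_gt0_l : (0 < d)%N.
Proof. by rewrite gcdn_gt0 m_gt0. Qed.

Lemma expr_gcdn_eq1 (x : R) : x ^+ m = 1 -> x ^+ l = 1 -> x ^+ d = 1.
Proof.
move=> xm xl; have [a _ /dvdnP [q def_q]] := Bezoutl l m_gt0.
have : x ^+ (d + a * l) = 1 by rewrite def_q mulnC exprM xm expr1n.
by rewrite exprD mulnC exprM xl expr1n mulr1.
Qed.

Lemma expr_root_divn_gcdn (x : R) : x ^+ m = 1 -> (x ^+ l) ^+ m' = 1.
Proof. by move=> xm; rewrite -exprM gcdnC muln_divCA_gcd exprM xm expr1n. Qed.

Lemma unity_root_fiber_size (s : seq R) z :
  uniq s -> {in s, forall x, x ^+ m = 1 /\ x ^+ l = z} -> (size s <= d)%N.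
Proof.
case: s => [|x0 s] // uniq_s s_fiber.
have [x0m x0l] := s_fiber x0 (mem_head _ _).
have x0_neq0 : x0 != 0.
  by apply: contra_eq_neq x0m => ->; rewrite expr0n gtn_eqF // eq_sym oner_eq0.
rewrite -(size_map (fun x => x / x0)).
apply: max_unity_roots gcdn_gt0_l _ _; last first.
  by rewrite (map_inj_uniq (divIf x0_neq0)).
apply/allP => _ /mapP [x /s_fiber [xm xl] ->]; apply/unity_rootP.
apply: expr_gcdn_eq1; rewrite expr_div_n ?xm ?x0m ?divr1 // xl -x0l divff //.
exact: expf_neq0.
Qed.

Lemma card_expr_fiber_le n (x : 'I_n -> R) z :
  (forall i, x i ^+ m = 1) -> injective x ->
  (#|[pred i | x i ^+ l == z]| <= d)%N.
Proof.
move=> xm x_inj; rewrite cardE -(size_map x).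
apply: unity_root_fiber_size; first by rewrite map_inj_uniq ?enum_uniq.
move=> _ /mapP [i + ->]; rewrite mem_enum inE => /eqP xl.
by split; [exact: xm | exact: xl].
Qed.

Variable w : R.
Hypothesis w_prim : m.-primitive_root w.

Lemma prim_root_expr_gcdn : m'.-primitive_root (w ^+ l).
Proof. by rewrite gcdnC; apply: exp_prim_root. Qed.

Lemma expr_lift_root j k : (w ^+ (j + m' * k)) ^+ l = (w ^+ l) ^+ j.
Proof.
have wl_root := expr_root_divn_gcdn (prim_expr_order w_prim).
by rewrite -exprM mulnC exprM exprD exprM wl_root expr1n mulr1.
Qed.

Lemma lift_root_inj j1 j2 k1 k2 :
  (j1 < m')%N -> (j2 < m')%N -> (k1 < d)%N -> (k2 < d)%N ->
  w ^+ (j1 + m' * k1) = w ^+ (j2 + m' * k2) -> j1 = j2 /\ k1 = k2.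
Proof.
move=> j1_lt j2_lt k1_lt k2_lt /eqP; rewrite (eq_prim_root_expr w_prim).
have m'_gt0 : (0 < m')%N := leq_ltn_trans (leq0n _) j1_lt.
have lift_lt j k : (j < m')%N -> (k < d)%N -> (j + m' * k < m)%N.
  move=> j_lt k_lt; apply: (@leq_trans (m' * k.+1)).
    by rewrite mulnS ltn_add2r.
  apply: (@leq_trans (m' * d)); first by rewrite leq_mul2l k_lt orbT.
  by rewrite divnK ?dvdn_gcdl.
have lift_div j k : (j < m')%N -> ((j + m' * k) %/ m' = k)%N.
  by move=> j_lt; rewrite mulnC addnC divnMDl // divn_small ?addn0.
rewrite !modn_small ?lift_lt // => /eqP eq_lift.
have eq_k : k1 = k2 by rewrite -(lift_div j1 k1) // eq_lift lift_div.
by split=> //; move: eq_lift; rewrite eq_k => /addIn.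
Qed.

Lemma lift_configuration n (y : 'I_n -> R) :
  (forall i, y i ^+ m' = 1) -> (forall z, (#|[pred i | y i == z]| <= d)%N) ->
  exists x : 'I_n -> R,
    [/\ forall i, x i ^+ m = 1, forall i, x i ^+ l = y i & injective x].
Proof.
move=> ym y_mult; have wl_prim := prim_root_expr_gcdn.
pose j i := sval (prim_rootP wl_prim (ym i)).
have def_y i : y i = (w ^+ l) ^+ j i := svalP (prim_rootP wl_prim (ym i)).
have rank_lt i : (fiber_rank y i < d)%N.
  exact: leq_trans (fiber_rank_lt y i) (y_mult _).
exists (fun i => w ^+ (j i + m' * fiber_rank y i)).
split=> [i | i | i1 i2].
- by rewrite exprAC (prim_expr_order w_prim) expr1n.
- by rewrite expr_lift_root def_y.
move=> /lift_root_inj.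
case=> [||||/val_inj eq_j]; rewrite ?rank_lt //; apply: fiber_rank_inj.
by rewrite !def_y eq_j.
Qed.

End PowerMapOnRoots.

Theorem theorem3 (m l n : nat) :
  (0 < m)%N -> (0 < l)%N -> (2 <= n)%N -> (n <= m)%N ->
  (height_le n l m 1 <->
   (in_W 1 (m %/ gcdn m l) n /\ height_le n 1 (m %/ gcdn m l) (gcdn m l))).
Proof.
move=> m_gt0 _ n_ge2 _; split.
- case=> x [xm [sum_xl /mult_le1P x_inj]].
  have powers_vanish : \sum_(i < n) (x i ^+ l) ^+ 1 = 0.
    by under eq_bigr do rewrite expr1.
  have powers_root i : in_Omega (m %/ gcdn m l) (x i ^+ l).
    exact: expr_root_divn_gcdn (xm i).
  split; first by split; [exact: leq_trans n_ge2 | exists (fun i => x i ^+ l)].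
  exists (fun i => x i ^+ l); do 2!split=> //.
  by move=> z; apply: card_expr_fiber_le.
- case=> _ [y [ym [sum_y y_mult]]].
  have [w w_prim] := C_prim_root_exists m_gt0.
  have [x [xm xl x_inj]] := lift_configuration w_prim ym y_mult.
  exists x; split=> //; split; last exact/mult_le1P.
  by under eq_bigr do rewrite xl -[y _]expr1.
Qed.
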